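(* Let $V=\mathrm{span}_{\mathbb{F}_q}\{x_1,\dots,x_n\}\subset S$, let $m\ge1$, let $\lambda=(n^m)$ be the partition with $m$ parts all equal to $n$, and let $\mu\subseteq\lambda$ be a partition with conjugate $\mu'$. Then, in $\widehat S$, $$T_{\lambda/\mu}(V)=(-1)^{nm+|\mu|}\,\frac{\det\big(x_i^{q^{\,n+j-\mu'_j-1}}\big)_{1\le i,j\le n}}{\det\big(x_i^{q^{\,n+j-m-1}}\big)_{1\le i,j\le n}}.$$
   Context: Let $q$ be a power of a prime $p$, $S=\mathbb{F}_q[x_1,\dots,x_n]$, $\widehat S=\bigcup_{r\ge0}\mathbb{F}_q[x_1^{q^{-r}},\dots,x_n^{q^{-r}}]$ (so $x_i^{q^{e}}$ makes sense for all $e\in\mathbb{Z}$), $\varphi(u)=u^q$ the Frobenius automorphism of $\widehat S$. For a subspace $W\subset S$ of dimension $k$ with basis $w_1,\dots,w_k$ and strictly decreasing nonnegative integers $\alpha_1>\dots>\alpha_k$, $A_\alpha(W)=\det(w_i^{q^{\alpha_j}})_{i,j}$; for a partition $\lambda$ with at most $k$ nonzero parts, $S_\lambda(W)=A_{\lambda+\delta_k}(W)/A_{\delta_k}(W)$, $\delta_k=(k-1,\dots,0)$. $E_r(W)=S_{(1^r)}(W)$ for $0\le r\le k$, $E_r(W)=0$ otherwise. For partitions $\lambda,\mu$ with $N=\max\{\ell(\lambda),\ell(\mu)\}$ ($\ell$ = number of nonzero parts), $T_{\lambda/\mu}(W)=\det\big((-1)^{\lambda_i-\mu_j-i+j}\varphi^{\lambda_i-i}E_{\lambda_i-\mu_j-i+j}(W)\big)_{1\le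 i,j\le N}$. $|\mu|$ is the sum of the parts of $\mu$, and $\mu\subseteq\lambda$ means $\mu_i\le\lambda_i$ for all $i$. *)

From HB Require Import structures.
From mathcomp Require Import all_boot all_order all_algebra all_field.
From mathcomp Require Export mpoly.
Set Implicit Arguments. Unset Strict Implicit. Unset Printing Implicit Defensive.
Import Order.TTheory GRing.Theory Num.Theory.
Local Open Scope ring_scope.

(* The ambient ring \hat S is realized inside a perfect field K:
   [finv] is a q-th root function on K, so that the Frobenius u |-> u^q is
   bijective, with inverse [finv]. *)
Section Defs.
Variables (K : fieldType) (q : nat) (finv : K -> K).

Definition frob (e : int) (y : K) : K :=
  match e with
  | Posz k => y ^+ (q ^ k)
  | Negz k => iter k.+1 finv y
  end.

Variables (n : nat) (x : 'I_n -> K).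

(* A_alpha(V) for the basis x_1..x_n of V, alpha given 0-indexed *)
Definition Adet (alpha : 'I_n -> nat) : K :=
  \det (\matrix_(i < n, j < n) x i ^+ (q ^ alpha j)).

Definition delta_exp (j : 'I_n) : nat := (n - 1 - j)%N.
(* (1^r) + delta_n *)
Definition alpha_E (r : nat) (j : 'I_n) : nat := (n - 1 - j + (j < r))%N.

(* E_r(V) = S_(1^r)(V) for 0 <= r <= n, and 0 otherwise *)
Definition Eel (r : int) : K :=
  if (0 <= r) && (r <= n%:Z) then Adet (alpha_E (absz r)) / Adet delta_exp
  else 0.

(* partitions: nonincreasing sequences of naturals (trailing zeros allowed);
   parts are read with nth 0, so lam_i = nth 0 lam (i-1) *)
Definition ellp (s : seq nat) : nat := count (fun a => 0 < a)%N s.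

Definition Tskew (lam mu : seq nat) : K :=
  let N := maxn (ellp lam) (ellp mu) in
  \det (\matrix_(i < N, j < N)
     let e : int := (nth 0 lam i)%:Z - (nth 0 mu j)%:Z - i%:Z + j%:Z in
     (-1) ^+ (absz e) * frob ((nth 0 lam i)%:Z - (i.+1)%:Z) (Eel e)).
End Defs.

Definition is_partition (s : seq nat) : bool := sorted geq s.
Definition subpart (mu lam : seq nat) : Prop :=
  forall i, (nth 0 mu i <= nth 0 lam i)%N.
(* conjugate partition, 1-indexed: mu'_j = #{ i | mu_i >= j } *)
Definition conjp (mu : seq nat) (j : nat) : nat := count (fun a => j <= a)%N mu.

From HB Require Import structures.
From mathcomp Require Import all_boot all_order all_algebra all_field.
From mathcomp Require Import mpoly.
From mathcomp Require Import zify ring fingroup perm pgroup abelian.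
Import Order.TTheory GRing.Theory Num.Theory.
Set Implicit Arguments. Unset Strict Implicit.

(* Let X be the n x (m + n) matrix with entries phi^(2n-1-c)(x_a) and W the
   (m + n) x m matrix with entries (-1)^(c-i) phi^(n-1-i)(E_(c-i)(V)).  Each x_a
   is a root of the q-polynomial sum_r (-1)^r E_r(V) t^(q^(n-r)), so XW = 0, and
   the top m x m block of W is unitriangular.  Consequently, for any m x (m + n)
   matrix Y, det [Y; X] = det (YW) det (right n x n block of X).  Choosing for Y
   the unit rows at the positions of the vertical steps of the boundary of mu in
   the m x n rectangle, YW is the transposed Jacobi-Trudi matrix of T_(lambda/mu),
   the right block of X is the denominator (columns reversed), and Laplace
   expansion along Y leaves the columns of X at the horizontal steps, i.e. the
   numerator, with sign (-1)^(nm + |mu|). *)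

Section IncreasingSequences.
Variables (D : nat -> nat) (n : nat).
Hypothesis D_incr : forall j, j.+1 < n -> D j < D j.+1.

Lemma incr_leq_addn i j : i <= j -> j < n -> D i + (j - i) <= D j.
Proof.
elim: j => [|j IH] hij hjn; first by move: hij; rewrite leqn0 => /eqP ->; rewrite addn0.
case: (leqP i j) => hij'; last by rewrite (_ : i = j.+1) ?subnn ?addn0 //; lia.
by have := IH hij' (ltnW hjn); have := D_incr hjn; lia.
Qed.

Lemma incr_ltn i j : i < j -> j < n -> D i < D j.
Proof. by move=> hij hj; have := incr_leq_addn (ltnW hij) hj; lia. Qed.

Lemma incr_bounded_id : (forall j, j < n -> D j < n) -> forall j, j < n -> D j = j.
Proof.
move=> D_lt j hj; have hn : n.-1 < n by lia.
have hjn : j <= n.-1 by lia.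
have := incr_leq_addn (leq0n j) hj; have := incr_leq_addn hjn hn.
by have := D_lt _ hn; lia.
Qed.
End IncreasingSequences.

Lemma bump_eq (a c b : nat) : a < b -> (bump a c == b) = (c == b.-1).
Proof.
by rewrite /bump => a_lt_b; case: leqP => /= a_c; apply/eqP/eqP; lia.
Qed.

Section Partitions.

Lemma sumn_nth_ord (s : seq nat) N :
  (forall k, N <= k -> nth 0 s k = 0) -> sumn s = \sum_(k < N) nth 0 s k.
Proof.
elim: s N => [|a s IH] [|N] s_out /=.
- by rewrite big_ord0.
- by rewrite big1 // => k _; rewrite nth_nil.
- rewrite big_ord0 -[a]/(nth 0 (a :: s) 0) s_out // (IH 0) ?big_ord0 // => k _.
  exact: (s_out k.+1).
- by rewrite big_ord_recl /= (IH N) // => k hk; apply: (s_out k.+1).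
Qed.

Lemma ltn_conjp (s : seq nat) i k : is_partition s -> 0 < i ->
  (k < conjp s i) = (i <= nth 0 s k).
Proof.
move=> s_part i_gt0; elim: s s_part k => [|a s IH] s_part k /=.
  by rewrite nth_nil; lia.
have geq_trans : transitive geq by move=> ? ? ? h1 h2; apply: leq_trans h2 h1.
have s_le_a : all (geq a) s by apply: order_path_min geq_trans s_part.
move/path_sorted: s_part => s_part.
case: (leqP i a) => hia.
  by case: k => [|k] /=; rewrite ?hia // add1n ltnS IH.
have -> : conjp s i = 0.
  apply/eqP; rewrite -leqn0 leqNgt -has_count; apply/hasPn => b hb /=.
  by move/allP: s_le_a => /(_ b hb) /=; lia.
case: k => [|k] /=; first lia.
have : nth 0 s k <= a.
  case: (ltnP k (size s)) => hk; first by move/allP: s_le_a; apply; apply: mem_nth.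
  by rewrite nth_default.
lia.
Qed.

Variables (n m : nat) (mu : seq nat).
Hypothesis mu_sub : subpart mu (nseq m n).

Lemma nth_part_le k : nth 0 mu k <= n.
Proof. by have := mu_sub k; rewrite nth_nseq; case: ifP => _ //; lia. Qed.

Lemma nth_part_out k : m <= k -> nth 0 mu k = 0.
Proof. by move=> hk; have := mu_sub k; rewrite nth_nseq ltnNge hk /=; lia. Qed.

(* vstep and hstep list, in increasing order, the positions of the vertical
   and of the horizontal steps of the boundary path of mu inside the m x n
   rectangle; together they partition [0, m + n). *)
Definition vstep k := n + k - nth 0 mu k.
Definition hstep j := j + conjp mu (n - j).

Lemma vstep_lt k : k < m -> vstep k < m + n.
Proof. by rewrite /vstep; have := nth_part_le k; lia. Qed.

Lemma hstep_incr j : j.+1 < n -> hstep j < hstep j.+1.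
Proof.
have : conjp mu (n - j) <= conjp mu (n - j.+1) by apply: sub_count => a /=; lia.
by rewrite /hstep; lia.
Qed.

Lemma sum_vstep :
  \sum_(k < m) (k + vstep k) + sumn mu = (\sum_(k < m) k).*2 + n * m.
Proof.
rewrite (sumn_nth_ord nth_part_out) -big_split -mul2n big_distrr /=.
have -> : n * m = \sum_(k < m) n by rewrite sum_nat_const card_ord mulnC.
rewrite -big_split /=.
by apply: eq_bigr => k _; rewrite /vstep; have := nth_part_le k; lia.
Qed.

Hypothesis mu_part : is_partition mu.

Lemma nth_part_decr k : nth 0 mu k.+1 <= nth 0 mu k.
Proof.
case: (posnP (nth 0 mu k.+1)) => [-> //|mu_k1_gt0].
have : k.+1 < conjp mu (nth 0 mu k.+1) by rewrite ltn_conjp.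
by rewrite -ltn_conjp //; apply: ltnW.
Qed.

Lemma conjp_le i : 0 < i -> conjp mu i <= m.
Proof. by move=> i_gt0; rewrite leqNgt ltn_conjp // nth_part_out //; lia. Qed.

Lemma vstep_incr k : k.+1 < m -> vstep k < vstep k.+1.
Proof. by rewrite /vstep; have := nth_part_le k.+1; have := nth_part_decr k; lia. Qed.

Lemma hstep_lt j : j < n -> hstep j < m + n.
Proof. by move=> hj; rewrite /hstep; have := @conjp_le (n - j); lia. Qed.

Lemma vstep_neq_hstep k j : k < m -> j < n -> vstep k != hstep j.
Proof.
move=> hk hj; have := @ltn_conjp mu (n - j) k mu_part; have := nth_part_le k.
by rewrite /vstep /hstep; case: (leqP (n - j) (nth 0 mu k)); lia.
Qed.

End Partitions.

Local Open Scope ring_scope.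

Lemma det_col_perm (R : comPzRingType) n (s : 'S_n) (A : 'M[R]_n) :
  \det (col_perm s A) = (-1) ^+ s * \det A.
Proof. by rewrite col_permE det_mulmx det_perm odd_permV mulrC. Qed.

Lemma det_col_mx_mul_kernel (R : comPzRingType) m n (Y : 'M[R]_(m, m + n))
    (X : 'M[R]_(n, m + n)) (W : 'M[R]_(m + n, m)) :
  X *m W = 0 -> \det (col_mx Y X) * \det (usubmx W) = \det (Y *m W) * \det (rsubmx X).
Proof.
move=> XW0; pose G := block_mx (usubmx W) 0 (dsubmx W) (1%:M : 'M[R]_n).
have mulG p (Z : 'M[R]_(p, m + n)) : Z *m G = row_mx (Z *m W) (rsubmx Z).
  rewrite -{1}(hsubmxK Z) mul_row_block mulmx0 add0r mulmx1.
  by rewrite -mul_row_col hsubmxK vsubmxK.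
have : col_mx Y X *m G = block_mx (Y *m W) (rsubmx Y) 0 (rsubmx X).
  by rewrite mul_col_mx !mulG XW0 block_mxEv.
by move/(congr1 determinant); rewrite det_mulmx det_lblock det1 mulr1 det_ublock.
Qed.

Lemma sum_ord_window (V : nmodType) N i n (G : nat -> V) :
  (i + n < N)%N -> (forall c, (c < i)%N -> G c = 0) ->
  (forall c, (i + n < c)%N -> G c = 0) ->
  \sum_(c < N) G c = \sum_(r < n.+1) G (i + r)%N.
Proof.
move=> hN G_lo G_hi.
rewrite -(big_mkord xpredT G) -(big_mkord xpredT (fun r => G (i + r)%N)).
rewrite (@big_cat_nat _ _ _ i 0 N) //=; last lia.
rewrite big1_seq ?add0r; last first.
  by move=> c /andP[_]; rewrite mem_index_iota => /andP[_ ?]; apply: G_lo.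
rewrite (@big_cat_nat _ _ _ (i + n.+1) i N) /=; [|lia|lia].
rewrite [X in _ + X]big1_seq ?addr0; last first.
  by move=> c /andP[_]; rewrite mem_index_iota => /andP[? _]; apply: G_hi; lia.
by rewrite -{1}[i]add0n big_addn addKn; apply: eq_bigr => c _; rewrite addnC.
Qed.

Lemma det_rowsub0 (R : comPzRingType) m n (f : 'I_m -> 'I_n) :
  (0 < m)%N -> \det (rowsub f (0 : 'M[R]_(n, m))) = 0.
Proof.
case: m f => // m f _; rewrite (_ : rowsub f 0 = 0) ?det0 //.
by apply/matrixP => i j; rewrite !mxE.
Qed.

Definition unitrow_mx (R : pzRingType) m n (f : nat -> nat -> R) (C : nat -> nat) :
    'M[R]_(m + n) :=
  \matrix_(r, c) if (r < m)%N then ((c : nat) == C r)%:R else f (r - m)%N c.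

Lemma row'0_col'_unitrow_mx (R : pzRingType) m n (f : nat -> nat -> R) (C : nat -> nat)
    (c0 : 'I_(m.+1 + n)) :
  c0 = C 0%N :> nat -> (forall k, (k < m)%N -> (C 0%N < C k.+1)%N) ->
  row' ord0 (col' c0 (unitrow_mx m.+1 n f C)) =
  unitrow_mx m n (fun r c => f r (bump (C 0%N) c)) (fun k => (C k.+1).-1).
Proof.
move=> c0E C0_lt; apply/matrixP => r c; rewrite !mxE /= /bump /= add1n ltnS subSS c0E.
by case: ifP => // hr; rewrite bump_eq // C0_lt.
Qed.

Lemma det_unitrow_mx (R : comPzRingType) m n (f : nat -> nat -> R) (C D : nat -> nat) :
  (forall k, (k.+1 < m)%N -> (C k < C k.+1)%N) ->
  (forall j, (j.+1 < n)%N -> (D j < D j.+1)%N) ->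
  (forall k, (k < m)%N -> (C k < m + n)%N) ->
  (forall j, (j < n)%N -> (D j < m + n)%N) ->
  (forall k j, (k < m)%N -> (j < n)%N -> C k != D j) ->
  \det (unitrow_mx m n f C) =
  (-1) ^+ (\sum_(k < m) (k + C k)) * \det (\matrix_(j < n, j' < n) f j (D j')).
Proof.
elim: m f C D => [|m IH] f C D C_incr D_incr C_lt D_lt CD_neq.
  rewrite big_ord0 expr0 mul1r /unitrow_mx; congr (\det _); apply/matrixP => r c.
  by rewrite !mxE /= subn0 (incr_bounded_id D_incr D_lt (ltn_ord c)).
pose c0 := Ordinal (C_lt 0%N isT).
rewrite (expand_det_row _ ord0) (bigD1 c0) //= big1; last first.
  move=> c /negbTE hc; rewrite !mxE /=.
  by rewrite (_ : (c == C 0%N :> nat) = false) ?mul0r // -hc.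
rewrite addr0 !mxE /= eqxx mul1r /cofactor add0n.
have C0_lt k : (k < m)%N -> (C 0%N < C k.+1)%N by move=> hk; apply: (incr_ltn C_incr).
pose C' k := (C k.+1).-1.
pose D' j := if (D j < C 0%N)%N then D j else (D j).-1.
pose f' r c := f r (bump (C 0%N) c).
have -> : row' ord0 (col' c0 (unitrow_mx m.+1 n f C)) = unitrow_mx m n f' C' by exact: row'0_col'_unitrow_mx.
rewrite (IH f' C' D'); first last.
- move=> k j hk hj; rewrite /C' /D'; have := C0_lt _ hk.
  have := CD_neq k.+1 j hk hj; have := CD_neq 0%N j isT hj; case: ifPn => /=; lia.
- move=> j hj; rewrite /D'; have := D_lt _ hj; have := C_lt _ (ltn0Sn m); case: ifPn; lia.
- by move=> k hk; rewrite /C'; have := C_lt k.+1 hk; lia.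
- move=> j hj; rewrite /D'; have := D_incr _ hj; have := CD_neq 0%N j isT (ltnW hj).
  have := CD_neq 0%N j.+1 isT hj; do 2 case: ifPn => /=; lia.
- by move=> k hk; rewrite /C'; have := C_incr k.+1 hk; have := C0_lt k (ltnW hk); lia.
rewrite mulrA -exprD; congr (_ * _).
  rewrite big_ord_recl /=.
  have -> : (\sum_(i < m) (bump 0 i + C (bump 0 i)) =
             \sum_(i < m) (i + C' i) + \sum_(i < m) 2)%N.
    rewrite -big_split /=; apply: eq_bigr => i _; rewrite /C' /bump /= add1n.
    by have := C0_lt _ (ltn_ord i); lia.
  by rewrite sum_nat_const card_ord add0n addnA [RHS]exprD exprM sqrr_sign mulr1 exprD.
congr (\det _); apply/matrixP => j j'; rewrite !mxE /f'; congr f.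
rewrite /D' /bump; have := CD_neq 0%N j' isT (ltn_ord j').
by case: ifPn => h; case: leqP => h2 /= H; lia.
Qed.

Section ElementarySubspaceFunctions.
Variables (K : fieldType) (q n : nat) (x : 'I_n -> K).

Lemma bump_alpha_E (j : 'I_n.+1) (j' : 'I_n) : (n - bump j j')%N = @alpha_E n j j'.
Proof. by rewrite /alpha_E /bump; have := ltn_ord j'; have := ltn_ord j; case: leqP; lia. Qed.

(* Expansion along the first row of the (n+1) x (n+1) alternant with rows
   x_a, x_1, ..., x_n, which has a repeated row. *)
Lemma sum_Adet_alpha_E_eq0 (a : 'I_n) :
  \sum_(r < n.+1) (-1) ^+ r * Adet q x (@alpha_E n r) * x a ^+ (q ^ (n - r)) = 0.
Proof.
pose y (k : 'I_n.+1) := if unlift ord0 k is Some k' then x k' else x a.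
pose B := \matrix_(k < n.+1, j < n.+1) y k ^+ (q ^ (n - j)).
have : \det B = 0.
  apply: (@determinant_alternate _ _ _ ord0 (lift ord0 a)); first by rewrite neq_lift.
  by move=> j; rewrite !mxE /y liftK unlift_none.
rewrite (expand_det_row _ ord0) => B0; rewrite -[RHS]B0; apply: eq_bigr => j _.
rewrite /cofactor add0n [RHS]mulrC; congr (_ * _ * _).
  rewrite /Adet; congr (\det _); apply/matrixP => k j'.
  by rewrite !mxE /y liftK bump_alpha_E.
by rewrite mxE /y unlift_none.
Qed.

Lemma Eel_lt0 (e : int) : e < 0 -> Eel q x e = 0.
Proof. by rewrite /Eel ltNge => /negbTE ->. Qed.

Lemma Eel_gt (e : int) : n%:Z < e -> Eel q x e = 0.
Proof. by rewrite /Eel ltNge => /negbTE ->; rewrite andbF. Qed.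

Lemma Eel_nat (r : nat) : (r <= n)%N ->
  Eel q x r = Adet q x (@alpha_E n r) / Adet q x (@delta_exp n).
Proof. by rewrite /Eel /= lez_nat => ->. Qed.

Lemma Eel0 : Adet q x (@delta_exp n) != 0 -> Eel q x 0 = 1.
Proof.
move=> A_neq0; rewrite Eel_nat //.
rewrite (_ : Adet q x (@alpha_E n 0) = Adet q x (@delta_exp n)) ?divff //.
rewrite /Adet; congr (\det _); apply/matrixP => i j.
by rewrite !mxE /alpha_E /delta_exp ltn0 addn0.
Qed.
End ElementarySubspaceFunctions.

Section Frobenius.
Variables (K : fieldType) (q : nat) (finv : K -> K).
Hypothesis exprDq : forall a b : K, (a + b) ^+ q = a ^+ q + b ^+ q.
Hypothesis finvK : forall y : K, finv y ^+ q = y.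

Local Notation frob := (frob q finv).

Lemma exprBq (a b : K) : (a - b) ^+ q = a ^+ q - b ^+ q.
Proof. by apply/eqP; rewrite eq_sym subr_eq -exprDq subrK. Qed.

Lemma q_gt0 : (0 < q)%N.
Proof. by have := finvK 0; case: q => // /eqP; rewrite expr0 oner_eq0. Qed.

Lemma expq_inj : injective (fun y : K => y ^+ q).
Proof.
move=> y z /= /eqP; rewrite -subr_eq0 -exprBq expf_eq0 q_gt0 subr_eq0.
by move/eqP.
Qed.

Lemma finvB (a b : K) : finv (a - b) = finv a - finv b.
Proof. by apply: expq_inj; rewrite /= exprBq !finvK. Qed.

Lemma finvM (a b : K) : finv (a * b) = finv a * finv b.
Proof. by apply: expq_inj; rewrite /= exprMn !finvK. Qed.

Lemma finv1 : finv 1 = 1.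
Proof. by apply: expq_inj; rewrite /= finvK expr1n. Qed.

Lemma frob_is_zmod_morphism e : zmod_morphism (frob e).
Proof.
case: e => k a b /=.
  elim: k => [|k IH]; first by rewrite !expn0 !expr1.
  by rewrite expnSr !exprM IH exprBq.
by elim: k => [|k IH]; rewrite /= ?IH finvB.
Qed.

Lemma frob_is_monoid_morphism e : monoid_morphism (frob e).
Proof.
case: e => k; split=> [|a b] /=; first by rewrite expr1n.
- by rewrite exprMn.
- by elim: k => [|k IH]; rewrite /= ?IH finv1.
- by elim: k => [|k IH]; rewrite /= ?IH finvM.
Qed.

HB.instance Definition _ e :=
  GRing.isZmodMorphism.Build K K (frob e) (frob_is_zmod_morphism e).
HB.instance Definition _ e :=
  GRing.isMonoidMorphism.Build K K (frob e) (frob_is_monoid_morphism e).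

Lemma frobS e y : frob (e + 1) y = frob e y ^+ q.
Proof.
case: e => [k|[|k]]; first by rewrite /= -addn1 expnD expn1 exprM.
  by rewrite /= finvK expn0 expr1.
have -> : Negz k.+1 + 1 = Negz k by rewrite !NegzE; lia.
by rewrite /= finvK.
Qed.

Lemma frobDn (e : int) (k : nat) y : frob (e + k) y = frob e y ^+ (q ^ k).
Proof.
elim: k => [|k IH]; first by rewrite addr0 expn0 expr1.
by rewrite intS addrCA addrC frobS IH expnSr exprM.
Qed.

Lemma frobNzK k y : frob (Negz k) y ^+ (q ^ k.+1) = y.
Proof.
rewrite /=; elim: k => [|k IH]; first by rewrite expn1 finvK.
by rewrite iterS expnS exprM finvK.
Qed.

Lemma frob_comp a b y : frob a (frob b y) = frob (a + b) y.
Proof.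
case: b => k; first by rewrite /= rmorphXn frobDn.
by rewrite -[in RHS](frobNzK k y) rmorphXn -frobDn NegzE addrNK.
Qed.

Lemma frob_Eel_root (n : nat) (x : 'I_n -> K) (a : 'I_n) (s : int) :
  \sum_(r < n.+1) (-1) ^+ r * frob s (Eel q x r) * frob (s + (n - r)%N) (x a) = 0.
Proof.
have := congr1 (fun z => frob s (z / Adet q x (@delta_exp n))) (sum_Adet_alpha_E_eq0 q x a).
rewrite /= mul0r rmorph0 mulr_suml rmorph_sum => sum0; rewrite -[RHS]sum0.
apply: eq_bigr => r _; rewrite Eel_nat -1?ltnS //.
rewrite -[x a ^+ _]/(frob (n - r)%N (x a)) -frob_comp mulrAC -mulrA !rmorphM rmorph_sign.
ring.
Qed.

Section Rectangle.
Variables (n m : nat) (x : 'I_n -> K).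

Definition moore_mx : 'M[K]_n := \matrix_(i, j) x i ^+ (q ^ j).

Definition frob_powers_mx : 'M[K]_(n, m + n) :=
  \matrix_(a, c) frob (n%:Z + n%:Z - 1 - (c : nat)%:Z) (x a).

Definition Ecoef_mx : 'M[K]_(m + n, m) :=
  \matrix_(c, i) ((-1) ^+ absz ((c : nat)%:Z - (i : nat)%:Z)
                  * frob (n%:Z - 1 - (i : nat)%:Z) (Eel q x ((c : nat)%:Z - (i : nat)%:Z))).

Lemma frob_powers_mx_mul_Ecoef_mx : frob_powers_mx *m Ecoef_mx = 0.
Proof.
apply/matrixP => a i; rewrite !mxE.
pose G c := frob (n%:Z + n%:Z - 1 - c%:Z) (x a) * ((-1) ^+ absz (c%:Z - (i : nat)%:Z)
   * frob (n%:Z - 1 - (i : nat)%:Z) (Eel q x (c%:Z - (i : nat)%:Z))).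
rewrite (eq_bigr (fun c : 'I_(m + n) => G c)); last by move=> c _; rewrite !mxE.
rewrite (@sum_ord_window _ _ i n G).
- rewrite -[RHS](frob_Eel_root x a (n%:Z - 1 - (i : nat)%:Z)); apply: eq_bigr => r _.
  rewrite /G (_ : (i + r)%N%:Z - (i : nat)%:Z = (r : nat)%:Z); last lia.
  rewrite /= mulrC -!mulrA; congr (_ * (_ * frob _ _)); have := ltn_ord r; lia.
- by have := ltn_ord i; lia.
- by move=> c hc; rewrite /G Eel_lt0 ?rmorph0 ?mulr0 //; lia.
- by move=> c hc; rewrite /G Eel_gt ?rmorph0 ?mulr0 //; lia.
Qed.

Lemma det_usubmx_Ecoef_mx : Adet q x (@delta_exp n) != 0 -> \det (usubmx Ecoef_mx) = 1.
Proof.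
move=> A_neq0; rewrite det_trig; last first.
  apply/is_trig_mxP => c i hci; rewrite !mxE /= Eel_lt0; last lia.
  by rewrite rmorph0 mulr0.
by rewrite big1 // => i _; rewrite !mxE /= subrr /= Eel0 // rmorph1 expr0 mulr1.
Qed.

Lemma Ecoef_mx_eq0 : Adet q x (@delta_exp n) = 0 -> Ecoef_mx = 0.
Proof.
move=> A0; apply/matrixP => c i; rewrite !mxE /Eel A0 invr0 mulr0 if_same.
by rewrite rmorph0 mulr0.
Qed.

Definition moore_frob_mx : 'M[K]_n := \matrix_(i, j) frob ((n + j)%:Z - m%:Z) (x i).

Lemma rsubmx_frob_powers_mx :
  rsubmx frob_powers_mx = col_perm (perm (@rev_ord_inj n)) moore_frob_mx.
Proof. by apply/matrixP => i j; rewrite !mxE permE /=; congr frob; have := ltn_ord j; lia. Qed.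

Lemma det_moore_frob_mx : \det moore_frob_mx = frob (n%:Z - m%:Z) (\det moore_mx).
Proof.
rewrite -det_map_mx; congr (\det _); apply/matrixP => i j.
rewrite !mxE (_ : (n + j)%:Z - m%:Z = n%:Z - m%:Z + j%:Z) -?(frob_comp (n%:Z - m%:Z)) //.
lia.
Qed.

Lemma Adet_delta_exp : Adet q x (@delta_exp n) = (-1) ^+ perm (@rev_ord_inj n) * \det moore_mx.
Proof.
rewrite -det_col_perm /Adet; congr (\det _); apply/matrixP => i j.
by rewrite !mxE permE /delta_exp /=; congr (_ ^+ (q ^ _)); lia.
Qed.

Variable mu : seq nat.
Hypotheses (mu_sub : subpart mu (nseq m n)) (mu_part : is_partition mu).

Definition vstep_ord (k : 'I_m) : 'I_(m + n) := Ordinal (vstep_lt mu_sub (ltn_ord k)).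

Lemma Tskew_rect_rowsub : (0 < n)%N ->
  Tskew q finv x (nseq m n) mu = \det (rowsub vstep_ord Ecoef_mx).
Proof.
move=> n_gt0; have N_eq : maxn (ellp (nseq m n)) (ellp mu) = m.
  by rewrite /ellp count_nseq n_gt0 mul1n; apply/maxn_idPl/(conjp_le mu_sub mu_part).
rewrite /Tskew N_eq -det_tr; congr (\det _); apply/matrixP => i j.
rewrite !mxE /= nth_nseq ltn_ord -[mu`_i]/(nth 0%N mu i) /vstep.
have := nth_part_le mu_sub i => mu_i_le.
have -> : (n + i - nth 0 mu i)%N%:Z - j%:Z = n%:Z - (nth 0%N mu i)%:Z - j%:Z + i%:Z by lia.
by congr (_ * frob _ _); lia.
Qed.

Definition moore_conj_mx : 'M[K]_n :=
  \matrix_(i, j) frob ((n + j)%:Z - (conjp mu j.+1)%:Z) (x i).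

Lemma det_col_mx_frob_powers_mx :
  \det (col_mx (rowsub vstep_ord 1%:M) frob_powers_mx) =
  (-1) ^+ (n * m + sumn mu) * \det (col_perm (perm (@rev_ord_inj n)) moore_conj_mx).
Proof.
pose xn (a : nat) := if insub a is Some i then x i else 0.
pose f (a c : nat) := frob (n%:Z + n%:Z - 1 - c%:Z) (xn a).
have -> : col_mx (rowsub vstep_ord 1%:M) frob_powers_mx = unitrow_mx m n f (vstep n mu).
  apply/matrixP => r c; rewrite !mxE; case: splitP => r' ->; rewrite !mxE.
    by rewrite eq_sym.
  by rewrite /f /xn addKn valK.
rewrite (det_unitrow_mx f (vstep_incr mu_sub mu_part) (@hstep_incr n mu) (vstep_lt mu_sub)
          (hstep_lt mu_sub mu_part) (vstep_neq_hstep mu_sub mu_part)).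
congr (_ * _).
  have sign_neq0 : (-1) ^+ sumn mu != 0 :> K by rewrite signr_eq0.
  apply: (mulIf sign_neq0).
  rewrite -!exprD -addnA addnn sum_vstep // addnC !exprD -!muln2 !exprM.
  by rewrite !sqrr_sign.
congr (\det _); apply/matrixP => i j; rewrite !mxE permE /f /xn valK /hstep /=.
have -> : (n - j.+1).+1 = (n - j)%N by have := ltn_ord j; lia.
by congr frob; have := ltn_ord j; lia.
Qed.

Theorem Tskew_rect : (0 < n)%N -> (0 < m)%N ->
  Tskew q finv x (nseq m n) mu =
  (-1) ^+ (n * m + sumn mu) * \det moore_conj_mx / \det moore_frob_mx.
Proof.
move=> n_gt0 m_gt0; rewrite Tskew_rect_rowsub //.
have eps_neq0 : (-1) ^+ perm (@rev_ord_inj n) != 0 :> K by rewrite signr_eq0.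
have [A0|A_neq0] := eqVneq (Adet q x (@delta_exp n)) 0.
  (* all E_r(V) are then junk values 0 / 0 = 0, and both sides vanish *)
  have moore0 : \det moore_mx = 0.
    by apply: (mulfI eps_neq0); rewrite -Adet_delta_exp A0 mulr0.
  rewrite Ecoef_mx_eq0 // det_moore_frob_mx moore0 rmorph0 invr0 mulr0.
  exact: det_rowsub0.
have den_neq0 : \det moore_frob_mx != 0.
  rewrite det_moore_frob_mx fmorph_eq0; apply: contra A_neq0 => /eqP moore0.
  by rewrite Adet_delta_exp moore0 mulr0.
have := det_col_mx_mul_kernel (rowsub vstep_ord 1%:M) frob_powers_mx_mul_Ecoef_mx.
rewrite det_usubmx_Ecoef_mx // mulr1 -rowsubE det_col_mx_frob_powers_mx rsubmx_frob_powers_mx.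
rewrite !det_col_perm => key; apply: (mulIf (mulf_neq0 eps_neq0 den_neq0)).
rewrite -key [_ * \det moore_frob_mx]mulrC [RHS]mulrA divfK //.
by rewrite [_ * \det moore_conj_mx]mulrC mulrA.
Qed.

End Rectangle.

End Frobenius.

Lemma exprD_card (F : finFieldType) (K : fieldType) (f : {rmorphism F -> K}) (a b : K) :
  (a + b) ^+ #|F| = a ^+ #|F| + b ^+ #|F|.
Proof.
have [p p_pr pF] := finPcharP F.
apply: exprDn_pchar; rewrite (eq_pnat _ (pcharf_eq (rmorph_pchar f pF))).
by have /abelem_pgroup := fin_ring_pchar_abelem pF; rewrite pgroupE cardsT.
Qed.

Lemma Tskew_nseq0 (K : fieldType) q finv (x : 'I_0 -> K) m mu :
  subpart mu (nseq m 0) -> Tskew q finv x (nseq m 0) mu = 1.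
Proof.
move=> mu_sub; rewrite /Tskew (_ : maxn _ _ = 0%N) ?det_mx00 //.
rewrite /ellp count_nseq mul0n max0n; apply/eqP; rewrite -leqn0 leqNgt -has_count.
by apply/hasPn => a /(nthP 0%N) [k _ <-]; rewrite -leqNgt (nth_part_le mu_sub).
Qed.

Theorem mainTheorem3 (F : finFieldType) (n m : nat) (K : fieldType)
  (iota : {rmorphism {mpoly F[n]} -> K}) (finv : K -> K) (mu : seq nat) :
  injective iota ->
  (forall y : K, finv y ^+ #|F| = y) ->
  (1 <= m)%N ->
  is_partition mu ->
  subpart mu (nseq m n) ->
  let x := fun i : 'I_n => iota 'X_i in
  Tskew #|F| finv x (nseq m n) mu =
  (-1) ^+ (n * m + sumn mu)
  * \det (\matrix_(i < n, j < n)
            frob #|F| finv ((n + j)%:Z - (conjp mu j.+1)%:Z) (x i))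
  / \det (\matrix_(i < n, j < n)
            frob #|F| finv ((n + j)%:Z - m%:Z) (x i)).
Proof.
move=> _ finvK m_gt0 mu_part mu_sub x.
have exprD := exprD_card (iota \o @mpolyC n F).
have [n0|n_gt0] := posnP n; last exact: Tskew_rect.
subst n; rewrite Tskew_nseq0 // !det_mx00 divr1 mulr1 mul0n add0n.
rewrite (sumn_nth_ord (nth_part_out mu_sub)) big1 // => k _.
by apply/eqP; rewrite -leqn0 (nth_part_le mu_sub).
Qed.
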